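(* Let $0\le z<x$ and define $h(y)=\operatorname{BP}(x,y)+\operatorname{BP}(y,z)$ for $y\in(z,x)$. Call a pair $(u,v)$ good if $v\ge cu$ and bad if $v<cu$. At every $y\in(z,x)$ with $y\ne cx$ and $z\ne cy$, $h$ is differentiable, and: (i) if $(x,y)$ and $(y,z)$ are both good, then $h'(y)>0$ when $y<\frac{x+z}{2}$ and $h'(y)<0$ when $y>\frac{x+z}2$; (ii) if $(x,y)$ is good and $(y,z)$ is bad, then $h'(y)>0$ when $y<\frac{x}{2-c}$ and $h'(y)<0$ when $y>\frac x{2-c}$; (iii) if $(x,y)$ is bad (whether $(y,z)$ is good or bad), then $h'(y)>0$.
   Context: Let $c=e^{2\pi}/1728$. For $x\ge y\ge0$ define (with the convention $0\log0=0$) \[f(x,y)=(x-y)\log(1728(1-c))+x\log x-y\log y-(x-y)\log(x-y),\qquad g(x,y)=x\log1728-2\pi y,\] and $\operatorname{BP}(x,y)=f(x,y)$ if $y\ge cx$, $\operatorname{BP}(x,y)=g(x,y)$ if $y<cx$. This is continuous on $\{(x,y):x\ge y\ge0\}$. *)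

From Stdlib Require Import Reals Lra.
From Coquelicot Require Import Coquelicot.
Open Scope R_scope.

Definition c : R := exp (2 * PI) / 1728.

(* t log t with the convention 0 log 0 = 0 (only used for t >= 0) *)
Definition xlogx (t : R) : R := if Rlt_dec 0 t then t * ln t else 0.

Definition f (x y : R) : R :=
  (x - y) * ln (1728 * (1 - c)) + xlogx x - xlogx y - xlogx (x - y).

Definition g (x y : R) : R := x * ln 1728 - 2 * PI * y.

Definition BP (x y : R) : R := if Rle_dec (c * x) y then f x y else g x y.

(** Off the switching lines [y = c x] and [z = c y], each summand of [h] is
    locally one branch of [BP]: the branch [f] is differentiable since
    [d/dt (t ln t) = ln t + 1], and the branch [g] is affine.  Adding the two
    partial derivatives, the constants [ln (1728 (1 - c))] cancel or reduce to
    [ln (1 - c)], so the sign of [h'(y)] becomes a comparison of logarithms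
    ([x - y] against [y - z] or [(1 - c) y]), except when [(x, y)] is bad,
    where [ln 1728 - 2 pi > 0], i.e. [c < 1], forces [h'(y) > 0]. *)

From Pilot Require Import Defs.
From Stdlib Require Import Reals Lra.
From Coquelicot Require Import Coquelicot.
Open Scope R_scope.

Lemma PI_le_13_4 : PI <= 13 / 4.
Proof.
  assert (H := PI_ineq 5).
  cbv [sum_f_R0 tg_alt PI_tg] in H; simpl in H.
  rewrite ?S_INR, ?INR_0 in H. lra.
Qed.

Lemma exp_13_2_le : exp (13 / 2) <= 1458.
Proof.
  set (u := exp (1 / 2)).
  assert (u_pos : 0 < u) by apply exp_pos.
  assert (uu : u * u = exp 1) by (unfold u; rewrite <- exp_plus; f_equal; lra).
  assert (uu_le : u * u <= 3) by (rewrite uu; apply exp_le_3).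
  assert (u_le : u <= 2) by nra.
  replace (exp (13 / 2)) with ((u * u) ^ 6 * u).
  2:{ rewrite uu. unfold u. simpl. rewrite Rmult_1_r, <- !exp_plus. f_equal. lra. }
  assert ((u * u) ^ 6 <= 3 ^ 6) by (apply pow_incr; nra).
  assert (0 <= (u * u) ^ 6) by (apply pow_le; nra).
  nra.
Qed.

Lemma exp_2PI_lt_1728 : exp (2 * PI) < 1728.
Proof.
  assert (exp_le := exp_13_2_le).
  destruct (Rle_lt_or_eq_dec (2 * PI) (13 / 2)) as [lt | eq].
  - assert (PI_le := PI_le_13_4). lra.
  - assert (exp_lt := exp_increasing _ _ lt). lra.
  - rewrite eq. lra.
Qed.

Lemma c_pos : 0 < c.
Proof. unfold c. assert (H := exp_pos (2 * PI)). lra. Qed.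

Lemma c_lt_1 : c < 1.
Proof. unfold c. assert (H := exp_2PI_lt_1728). lra. Qed.

Lemma two_PI_lt_ln_1728 : 2 * PI < ln 1728.
Proof.
  rewrite <- (ln_exp (2 * PI)).
  apply ln_increasing; [apply exp_pos | apply exp_2PI_lt_1728].
Qed.

Lemma ln_1728_1_c : ln (1728 * (1 - c)) = ln 1728 + ln (1 - c).
Proof. assert (H := c_lt_1). apply ln_mult; lra. Qed.

Lemma is_derive_xlogx t : 0 < t -> is_derive xlogx t (ln t + 1).
Proof.
  intros t_pos.
  apply (is_derive_ext_loc (fun u => u * ln u)).
  - apply (filter_imp (fun u => 0 < u)); [|exact (open_gt 0 t t_pos)].
    intros u u_pos. unfold xlogx. destruct (Rlt_dec 0 u); [reflexivity | lra].
  - auto_derive; [exact t_pos | field; lra].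
Qed.

Lemma Derive_xlogx t : 0 < t -> Derive xlogx t = ln t + 1.
Proof. intros t_pos. apply is_derive_unique, is_derive_xlogx, t_pos. Qed.

Lemma is_derive_f_snd x y : 0 < y < x ->
  is_derive (fun t => Defs.f x t) y (ln (x - y) - ln y - ln (1728 * (1 - c))).
Proof.
  intros [y_pos y_lt_x]. unfold Defs.f.
  auto_derive.
  - split; [exists (ln y + 1) | split; [exists (ln (x - y) + 1) | exact I]];
      apply is_derive_xlogx; lra.
  - rewrite !Derive_xlogx by lra. unfold Rminus. ring.
Qed.

Lemma is_derive_f_fst y z : 0 <= z < y ->
  is_derive (fun t => Defs.f t z) y (ln y - ln (y - z) + ln (1728 * (1 - c))).
Proof.
  intros [z_ge0 z_lt_y]. unfold Defs.f.
  auto_derive.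
  - split; [exists (ln y + 1) | split; [exists (ln (y - z) + 1) | exact I]];
      apply is_derive_xlogx; lra.
  - rewrite !Derive_xlogx by lra. unfold Rminus. ring.
Qed.

Lemma is_derive_g_snd x y : is_derive (fun t => g x t) y (- (2 * PI)).
Proof. unfold g. auto_derive; [exact I | ring]. Qed.

Lemma is_derive_g_fst y z : is_derive (fun t => g t z) y (ln 1728).
Proof. unfold g. auto_derive; [exact I | ring]. Qed.

(* The values on the switching lines [y = c x], [z = c y] are arbitrary. *)
Definition BP_deriv_snd (x y : R) : R :=
  if Rle_dec (c * x) y then ln (x - y) - ln y - ln (1728 * (1 - c))
  else - (2 * PI).

Definition BP_deriv_fst (y z : R) : R :=
  if Rle_dec (c * y) z then ln y - ln (y - z) + ln (1728 * (1 - c))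
  else ln 1728.

Lemma is_derive_BP_snd x y : 0 < y < x -> y <> c * x ->
  is_derive (fun t => BP x t) y (BP_deriv_snd x y).
Proof.
  intros y_range y_neq. unfold BP_deriv_snd.
  destruct (Rle_dec (c * x) y) as [good | bad].
  - apply (is_derive_ext_loc (fun t => Defs.f x t)); [|exact (is_derive_f_snd x y y_range)].
    apply (filter_imp (fun t => c * x < t)); [|apply open_gt; lra].
    intros t t_good. unfold BP. destruct (Rle_dec (c * x) t); [reflexivity | lra].
  - apply (is_derive_ext_loc (fun t => g x t)); [|exact (is_derive_g_snd x y)].
    apply (filter_imp (fun t => t < c * x)); [|apply open_lt; lra].
    intros t t_bad. unfold BP. destruct (Rle_dec (c * x) t); [lra | reflexivity].
Qed.

Lemma is_derive_BP_fst y z : 0 <= z < y -> z <> c * y ->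
  is_derive (fun t => BP t z) y (BP_deriv_fst y z).
Proof.
  intros z_range z_neq. unfold BP_deriv_fst.
  assert (cz : forall t, c * t < z <-> t < z / c).
  { intros t. rewrite Rmult_comm. apply Rlt_div_r, c_pos. }
  assert (zc : forall t, z < c * t <-> z / c < t).
  { intros t. rewrite Rmult_comm. symmetry. apply Rlt_div_l, c_pos. }
  destruct (Rle_dec (c * y) z) as [good | bad].
  - apply (is_derive_ext_loc (fun t => Defs.f t z)); [|exact (is_derive_f_fst y z z_range)].
    apply (filter_imp (fun t => t < z / c)); [|apply open_lt, cz; lra].
    intros t t_good%cz. unfold BP. destruct (Rle_dec (c * t) z); [reflexivity | lra].
  - apply (is_derive_ext_loc (fun t => g t z)); [|exact (is_derive_g_fst y z)].
    apply (filter_imp (fun t => z / c < t)); [|apply open_gt, zc; lra].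
    intros t t_bad%zc. unfold BP. destruct (Rle_dec (c * t) z); [lra | reflexivity].
Qed.

Definition h_deriv (x y z : R) : R := BP_deriv_snd x y + BP_deriv_fst y z.

Lemma is_derive_h x y z : 0 <= z < y -> y < x -> y <> c * x -> z <> c * y ->
  is_derive (fun t => BP x t + BP t z) y (h_deriv x y z).
Proof.
  intros z_range y_lt_x y_neq z_neq.
  apply (is_derive_plus (fun t => BP x t) (fun t => BP t z)).
  - apply is_derive_BP_snd; [lra | exact y_neq].
  - apply is_derive_BP_fst; [exact z_range | exact z_neq].
Qed.

Section SignOfDerivative.

Variables x y z : R.
Hypothesis z_ge0 : 0 <= z.
Hypothesis z_lt_y : z < y.
Hypothesis y_lt_x : y < x.

Lemma h_deriv_good_good : c * x <= y -> c * y <= z ->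
  (y < (x + z) / 2 -> 0 < h_deriv x y z) /\ ((x + z) / 2 < y -> h_deriv x y z < 0).
Proof.
  intros Hxy Hyz.
  replace (h_deriv x y z) with (ln (x - y) - ln (y - z)).
  2:{ unfold h_deriv, BP_deriv_snd, BP_deriv_fst.
      destruct (Rle_dec (c * x) y); [|lra]. destruct (Rle_dec (c * y) z); [ring | lra]. }
  split; intros mid.
  - assert (ln (y - z) < ln (x - y)) by (apply ln_increasing; lra). lra.
  - assert (ln (x - y) < ln (y - z)) by (apply ln_increasing; lra). lra.
Qed.

Lemma h_deriv_good_bad : c * x <= y -> z < c * y ->
  (y < x / (2 - c) -> 0 < h_deriv x y z) /\ (x / (2 - c) < y -> h_deriv x y z < 0).
Proof.
  intros Hxy Hyz.
  assert (c_range := conj c_pos c_lt_1).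
  replace (h_deriv x y z) with (ln (x - y) - ln ((1 - c) * y)).
  2:{ unfold h_deriv, BP_deriv_snd, BP_deriv_fst.
      rewrite ln_1728_1_c, ln_mult by lra.
      destruct (Rle_dec (c * x) y); [|lra]. destruct (Rle_dec (c * y) z); [lra | ring]. }
  split; intros mid.
  - apply Rlt_div_r in mid; [|lra].
    assert (ln ((1 - c) * y) < ln (x - y)) by (apply ln_increasing; nra). lra.
  - apply Rlt_div_l in mid; [|lra].
    assert (ln (x - y) < ln ((1 - c) * y)) by (apply ln_increasing; nra). lra.
Qed.

(* When [(y, z)] is good, [y - z <= (1 - c) y] makes the logarithmic terms
   nonnegative, and [ln 1728 - 2 pi > 0] is the remaining, strict, part. *)
Lemma h_deriv_bad : y < c * x -> 0 < h_deriv x y z.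
Proof.
  intros Hxy.
  assert (c_range := conj c_pos c_lt_1). assert (ln_gap := two_PI_lt_ln_1728).
  unfold h_deriv, BP_deriv_snd, BP_deriv_fst.
  destruct (Rle_dec (c * x) y); [lra|]. destruct (Rle_dec (c * y) z); [|lra].
  rewrite ln_1728_1_c.
  assert (ln (y - z) <= ln ((1 - c) * y)) by (apply ln_le; nra).
  rewrite ln_mult in * by lra. lra.
Qed.

End SignOfDerivative.

Theorem mainTheorem14 (x z y : R) :
  0 <= z -> z < x -> z < y < x -> y <> c * x -> z <> c * y ->
  let h := fun t => BP x t + BP t z in
  ex_derive h y /\
  (* (i) (x,y) good and (y,z) good *)
  (c * x <= y -> c * y <= z ->
     (y < (x + z) / 2 -> Derive h y > 0) /\ (y > (x + z) / 2 -> Derive h y < 0)) /\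
  (* (ii) (x,y) good and (y,z) bad *)
  (c * x <= y -> z < c * y ->
     (y < x / (2 - c) -> Derive h y > 0) /\ (y > x / (2 - c) -> Derive h y < 0)) /\
  (* (iii) (x,y) bad *)
  (y < c * x -> Derive h y > 0).
Proof.
  intros z_ge0 _ [z_lt_y y_lt_x] y_neq z_neq h.
  assert (Dh : is_derive h y (h_deriv x y z))
    by (apply is_derive_h; [lra | exact y_lt_x | exact y_neq | exact z_neq]).
  rewrite (is_derive_unique _ _ _ Dh).
  split; [exists (h_deriv x y z); exact Dh|].
  split; [|split].
  - apply h_deriv_good_good; assumption.
  - apply h_deriv_good_bad; assumption.
  - apply h_deriv_bad; assumption.
Qed.
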